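(* Let $A\ne0$ be a real symmetric weighted adjacency matrix of a finite simple graph on $n$ vertices, and let $y\in\mathbb R$ satisfy $W_A(y)=\min\{W_A(x):\lambda_{\min}(A)^{-1}\le x\le\lambda_{\max}(A)^{-1}\}$. Then there exists $\boldsymbol u\in\mathbb R^n$ with $$|\boldsymbol u|^2=W_A(y),\qquad\langle\boldsymbol u,A\boldsymbol u\rangle=0,\qquad|\boldsymbol u|^2=\langle\boldsymbol 1,\boldsymbol u\rangle.$$
   Context: A weighted adjacency matrix is a real symmetric $A$ with $A_{ii}=0$ and $A_{ij}=0$ for non-adjacent $i\ne j$. $\boldsymbol 1$ is the all-ones vector. $W_A(x)=\sum_{\lambda\in\sigma(A)}\frac{\langle\boldsymbol 1,P_\lambda\boldsymbol 1\rangle}{1-\lambda x}$ with $P_\lambda$ the orthogonal eigenprojections of $A$, terms with $\langle\boldsymbol 1,P_\lambda\boldsymbol 1\rangle=0$ omitted, and value $+\infty$ at a pole. *)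

From HB Require Import structures.
From mathcomp Require Import all_boot all_order all_algebra.
From mathcomp Require Import polyrcf.
From mathcomp Require Import reals constructive_ereal.
Set Implicit Arguments. Unset Strict Implicit. Unset Printing Implicit Defensive.
Import Order.TTheory GRing.Theory Num.Theory.
Local Open Scope ring_scope.

Section Defs.
Variables (R : realType) (n : nat).

Definition weighted_adjacency (e : rel 'I_n) (A : 'M[R]_n) : Prop :=
  A^T = A /\ (forall i, A i i = 0) /\ (forall i j, i != j -> ~~ e i j -> A i j = 0).

Definition simple_graph (e : rel 'I_n) : Prop :=
  symmetric e /\ irreflexive e.

(* orthogonal projection onto the eigenspace of A for l (0 if l is not an
   eigenvalue): V^T (V V^T)^-1 V for V a row basis of the eigenspace *)
Definition eigenproj (A : 'M[R]_n) (l : R) : 'M[R]_n :=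
  let V := row_base (eigenspace A l) in V^T *m invmx (V *m V^T) *m V.

Definition ones : 'cV[R]_n := const_mx 1.

Definition eigweight (A : 'M[R]_n) (l : R) : R :=
  (ones^T *m eigenproj A l *m ones) 0 0.

(* the (distinct, sorted) eigenvalues of A *)
Definition spectrum (A : 'M[R]_n) : seq R := rootsR (char_poly A).

Definition lambda_min (A : 'M[R]_n) : R := head 0 (spectrum A).
Definition lambda_max (A : 'M[R]_n) : R := last 0 (spectrum A).

Definition WA (A : 'M[R]_n) (x : R) : \bar R :=
  let S := [seq l <- spectrum A | eigweight A l != 0] in
  if has (fun l => 1 - l * x == 0) S then +oo%E
  else (\sum_(l <- S) eigweight A l / (1 - l * x))%:E.

Definition sqnorm (u : 'cV[R]_n) : R := \sum_i u i 0 ^+ 2.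
Definition dotp (u v : 'cV[R]_n) : R := (u^T *m v) 0 0.

End Defs.

(* Write P_l for the eigenprojections of A, q_l = P_l 1 and w_l = |q_l|^2, so
   that W(x) = sum_l w_l / (1 - l x) and D := sum_l w_l l / (1 - l x)^2 is W'(x).
   A nonzero symmetric matrix with zero diagonal has an indefinite quadratic form,
   so lambda_min < 0 < lambda_max and every 1 - l x is nonnegative on the interval;
   as W(0) is finite, the minimiser x0 is not a pole.  The vector
   u0 = sum_l q_l / (1 - l x0) satisfies <1, u0> = W(x0), <u0, A u0> = D and
   |u0|^2 = W(x0) + x0 D.  If D = 0 then u0 works.  Otherwise x0 is the endpoint
   1/mu (mu = lambda_max if D < 0, lambda_min if D > 0), w_mu = 0, and a
   mu-eigenvector v is orthogonal to 1 and to u0: adding t v with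
   t^2 = -D / (mu |v|^2) cancels both x0 D in |u|^2 and D in <u, A u>. *)

From HB Require Import structures.
From mathcomp Require Import all_boot all_order all_algebra.
From mathcomp Require Import polyrcf.
From mathcomp Require Import reals constructive_ereal.
From mathcomp Require Import complex.
From mathcomp Require spectral.
From mathcomp Require Import ring lra.
Set Implicit Arguments. Unset Strict Implicit. Unset Printing Implicit Defensive.
Import Order.TTheory GRing.Theory Num.Theory.
Local Open Scope ring_scope.

Section Gram.
Variable R : realDomainType.

Lemma gram_diag_ge0 p q (M : 'M[R]_(p, q)) i : 0 <= (M *m M^T) i i.
Proof. by rewrite mxE; apply: sumr_ge0 => k _; rewrite mxE -expr2 sqr_ge0. Qed.

Lemma gram_eq0 p q (M : 'M[R]_(p, q)) : M *m M^T = 0 -> M = 0.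
Proof.
move=> MM0; apply/matrixP => i j; rewrite mxE.
have /matrixP /(_ i i) := MM0; rewrite !mxE => /psumr_eq0P MMii.
have /MMii /(_ j isT) : forall k, true -> 0 <= M i k * M^T k i.
  by move=> k _; rewrite mxE -expr2 sqr_ge0.
by rewrite mxE => /eqP; rewrite -expr2 sqrf_eq0 => /eqP.
Qed.

End Gram.

Section RealEigenvector.
Variable R : rcfType.
Local Notation toC := (map_mx (real_complex R)).
Local Notation Re_mx := (map_mx (@complex.Re R)).
Local Notation Im_mx := (map_mx (@complex.Im R)).

Lemma Re_mulmx_real p q r (u : 'M[R[i]]_(p, q)) (M : 'M[R]_(q, r)) :
  Re_mx (u *m toC M) = Re_mx u *m M.
Proof.
apply/matrixP => i j; rewrite !mxE (raddf_sum (@complex.Re R)).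
by apply: eq_bigr => k _; rewrite !mxE; case: (u i k) => a b /=; rewrite mulr0 subr0.
Qed.

Lemma Im_mulmx_real p q r (u : 'M[R[i]]_(p, q)) (M : 'M[R]_(q, r)) :
  Im_mx (u *m toC M) = Im_mx u *m M.
Proof.
apply/matrixP => i j; rewrite !mxE (raddf_sum (@complex.Im R)).
by apply: eq_bigr => k _; rewrite !mxE; case: (u i k) => a b /=; rewrite mulr0 add0r.
Qed.

Lemma stable_complex_eigenpair n (A : 'M[R]_n) m (U : 'M[R]_(m, n)) :
  U != 0 -> stablemx U A ->
  exists x y (a b : 'rV[R]_n), [/\ (a != 0) || (b != 0), (a <= U)%MS, (b <= U)%MS,
    a *m A = x *: a - y *: b & b *m A = x *: b + y *: a].
Proof.
move=> U0 sUA; set V := row_base U.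
have ReIm_eq0 (u : 'rV[R[i]]_n) : Re_mx u = 0 -> Im_mx u = 0 -> u = 0.
  move=> /matrixP Reu /matrixP Imu; apply/matrixP => i j.
  by have := Reu i j; have := Imu i j; rewrite !mxE; case: (u i j) => ? ? /= -> ->.
have rkU : (0 < \rank U)%N by rewrite lt0n mxrank_eq0.
(* [V *m A *m pinvmx V] is the matrix of [A] restricted to the row space of [U]. *)
have VA : V *m A *m pinvmx V *m V = V *m A by rewrite mulmxKpV ?stablemx_row_base.
have [z /eigenvalueP [c cB c0]] :=
  spectral.eigenvalue_closed (toC (V *m A *m pinvmx V)) rkU.
set v := c *m toC V.
have vA : v *m toC A = z *: v by rewrite -mulmxA -map_mxM -VA map_mxM mulmxA cB -scalemxAl.
have v0 : v != 0.
  by rewrite mulmx_free_eq0 // /row_free mxrank_map; exact: row_base_free.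
have [ReU ImU] : (Re_mx v <= U)%MS /\ (Im_mx v <= U)%MS.
  by rewrite Re_mulmx_real Im_mulmx_real; split; apply: submx_trans (submxMl _ _) _;
    rewrite eq_row_base.
clearbody v; exists (complex.Re z), (complex.Im z), (Re_mx v), (Im_mx v); split => //.
- apply: contraR v0 => /norP [/negPn/eqP Rev /negPn/eqP Imv].
  by rewrite (ReIm_eq0 _ Rev Imv).
- rewrite -Re_mulmx_real vA; apply/matrixP => i j; rewrite !mxE.
  by case: (z) (v i j) => ? ? [? ?].
- rewrite -Im_mulmx_real vA; apply/matrixP => i j; rewrite !mxE.
  by case: (z) (v i j) => ? ? [? ?] /=; rewrite addrC.
Qed.

Lemma symmetric_eigenpair_real n (A : 'M[R]_n) x y (a b : 'rV[R]_n) :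
  A^T = A -> (a != 0) || (b != 0) ->
  a *m A = x *: a - y *: b -> b *m A = x *: b + y *: a -> y = 0.
Proof.
move=> sA ab0 aA bA.
pose dot (u v : 'rV[R]_n) : R := (u *m v^T) 0 0.
have dotC u v : dot u v = dot v u.
  by rewrite /dot -[v *m u^T]trmxK trmx_mul trmxK [RHS]mxE.
have dotA u v : dot (u *m A) v = dot u (v *m A).
  by rewrite /dot trmx_mul sA mulmxA.
have dotDZ u v u' (k k' : R) : dot (k *: u + k' *: v) u' = k * dot u u' + k' * dot v u'.
  by rewrite /dot mulmxDl -!scalemxAl !mxE.
have : y * (dot a a + dot b b) = 0.
  have := dotA a b; rewrite aA bA -scaleNr dotDZ.
  rewrite [dot a (_ + _)]dotC dotDZ [dot b a]dotC.
  move: (dot a b) (dot a a) (dot b b) => ab aa bb E.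
  have -> : y * (aa + bb) = (x * ab + y * aa) - (x * ab + - y * bb) by ring.
  by rewrite E subrr.
have aa_ge0 : 0 <= dot a a := @gram_diag_ge0 _ _ _ a 0.
have bb_ge0 : 0 <= dot b b := @gram_diag_ge0 _ _ _ b 0.
have dot_eq0 u : dot u u = 0 -> u = 0.
  by move=> uu; apply: gram_eq0; apply/matrixP => i j; rewrite !ord1 [RHS]mxE.
move/eqP; rewrite mulf_eq0 => /orP [/eqP //|].
rewrite paddr_eq0 // => /andP [/eqP /dot_eq0 a0 /eqP /dot_eq0 b0].
by move: ab0; rewrite a0 b0 eqxx.
Qed.

Lemma symmetric_stable_eigenvector n (A : 'M[R]_n) m (U : 'M[R]_(m, n)) :
  A^T = A -> U != 0 -> stablemx U A ->
  exists x, exists2 w : 'rV[R]_n, w != 0 & (w <= U)%MS && (w <= eigenspace A x)%MS.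
Proof.
move=> sA U0 sUA; have [x [y [a [b [ab0 aU bU aA bA]]]]] := stable_complex_eigenpair U0 sUA.
have y0 := symmetric_eigenpair_real sA ab0 aA bA.
move: aA bA; rewrite y0 !scale0r subr0 addr0 => aA bA.
exists x; case/orP: ab0 => [a0|b0]; [exists a|exists b] => //; rewrite ?aU ?bU.
- by apply/eigenspaceP.
- by apply/eigenspaceP.
Qed.

End RealEigenvector.

Section OrthoProjection.
Variable R : realFieldType.

Definition orthoproj p n (W : 'M[R]_(p, n)) : 'M[R]_n := W^T *m invmx (W *m W^T) *m W.

Variables (p n : nat) (W : 'M[R]_(p, n)).
Hypothesis freeW : row_free W.

Lemma gram_unit : W *m W^T \in unitmx.
Proof.
rewrite -row_free_unit -kermx_eq0; apply/eqP.
have KW : kermx (W *m W^T) *m W = 0.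
  by apply: gram_eq0; rewrite trmx_mul mulmxA -(mulmxA (kermx _)) mulmx_ker mul0mx.
by apply/eqP; rewrite -(mulmx_free_eq0 _ freeW) KW.
Qed.

Lemma orthoproj_sym : (orthoproj W)^T = orthoproj W.
Proof. by rewrite /orthoproj !trmx_mul trmxK trmx_inv trmx_mul trmxK mulmxA. Qed.

Lemma orthoproj_id q (X : 'M[R]_(q, n)) : (X <= W)%MS -> X *m orthoproj W = X.
Proof.
case/submxP=> Y ->; rewrite /orthoproj !mulmxA -(mulmxA Y) -(mulmxA _ (W *m W^T)).
by rewrite mulmxV ?gram_unit // mulmx1.
Qed.

Lemma orthoproj_idem : orthoproj W *m orthoproj W = orthoproj W.
Proof. by rewrite {1}/orthoproj -mulmxA orthoproj_id. Qed.

Lemma orthoprojA (A : 'M[R]_n) l : W *m A = l *: W -> orthoproj W *m A = l *: orthoproj W.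
Proof. by move=> WA; rewrite /orthoproj -mulmxA WA -scalemxAr. Qed.

Lemma orthoproj_orth q (W' : 'M[R]_(q, n)) :
  W *m W'^T = 0 -> orthoproj W *m orthoproj W' = 0.
Proof. by move=> WW'; rewrite /orthoproj !mulmxA -(mulmxA _ W) WW' mulmx0 !mul0mx. Qed.

End OrthoProjection.

Section Eigenprojections.
Variables (R : realType) (n : nat) (A : 'M[R]_n).
Hypothesis sA : A^T = A.

Lemma eigenprojE l : eigenproj A l = orthoproj (row_base (eigenspace A l)).
Proof. by []. Qed.

Lemma eigenproj_sym l : (eigenproj A l)^T = eigenproj A l.
Proof. exact: orthoproj_sym. Qed.

Lemma eigenproj_id l p (W : 'M[R]_(p, n)) :
  (W <= eigenspace A l)%MS -> W *m eigenproj A l = W.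
Proof. by move=> WE; rewrite eigenprojE orthoproj_id ?row_base_free ?eq_row_base. Qed.

Lemma eigenproj_idem l : eigenproj A l *m eigenproj A l = eigenproj A l.
Proof. exact/orthoproj_idem/row_base_free. Qed.

Lemma eigenprojA l : eigenproj A l *m A = l *: eigenproj A l.
Proof. by apply/orthoprojA/eigenspaceP; rewrite eq_row_base. Qed.

Lemma mulmx_eigenproj l : A *m eigenproj A l = l *: eigenproj A l.
Proof.
by rewrite -{1}sA -{1}eigenproj_sym -trmx_mul eigenprojA linearZ /= eigenproj_sym.
Qed.

Lemma eigenproj_orth l m : l != m -> eigenproj A l *m eigenproj A m = 0.
Proof.
move=> lm; apply: orthoproj_orth.
have eigen_base k : row_base (eigenspace A k) *m A = k *: row_base (eigenspace A k).
  by apply/eigenspaceP; rewrite eq_row_base.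
move: (eigen_base l) (eigen_base m).
move: (row_base (eigenspace A l)) (row_base (eigenspace A m)) => Vl Vm VlA VmA.
suff : (l - m) *: (Vl *m Vm^T) = 0.
  by move/eqP; rewrite scaler_eq0 subr_eq0 (negbTE lm) => /eqP.
rewrite scalerBl scalemxAl -VlA scalemxAr.
have -> : m *: Vm^T = (Vm *m A)^T by rewrite VmA linearZ.
by rewrite trmx_mul sA mulmxA subrr.
Qed.

Lemma mem_spectrum x : (x \in spectrum A) = eigenvalue A x.
Proof.
rewrite eigenvalue_root_char /spectrum.
by rewrite -(roots_on_rootsR (monic_neq0 (char_poly_monic A))) in_itv.
Qed.

Lemma uniq_spectrum : uniq (spectrum A).
Proof. exact: uniq_roots. Qed.

Lemma eigenproj_sum : \sum_(l <- spectrum A) eigenproj A l = 1%:M.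
Proof.
set S := \sum_(l <- _) _; set Q := 1%:M - S.
suff : Q = 0 by move/eqP; rewrite subr_eq0 => /eqP <-.
have QP l : l \in spectrum A -> Q *m eigenproj A l = 0.
  move=> ls; rewrite mulmxBl mul1mx /S mulmx_suml (bigD1_seq l) ?uniq_spectrum //=.
  by rewrite eigenproj_idem big1 ?addr0 ?subrr // => m ml; rewrite eigenproj_orth.
have Qsym : Q^T = Q.
  rewrite linearB /= trmx1 /S raddf_sum; congr (_ - _).
  by apply: eq_bigr => l _; apply: eigenproj_sym.
have QQ : Q *m Q = Q.
  rewrite {1}/Q mulmxBl mul1mx /S mulmx_suml big_seq big1 ?subr0 // => l ls.
  by rewrite -[eigenproj A l]eigenproj_sym -Qsym -trmx_mul QP // trmx0.
have AQ : A *m Q = Q *m A.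
  rewrite /Q mulmxBr mulmxBl mulmx1 mul1mx /S mulmx_sumr mulmx_suml; congr (_ - _).
  by apply: eq_bigr => l _; rewrite mulmx_eigenproj eigenprojA.
(* Otherwise the range of [Q] is a nonzero [A]-stable subspace, so it contains an
   eigenvector of [A]; but [Q] kills every eigenvector. *)
apply/eqP; apply: contraT => Q0.
have sQA : stablemx Q A by rewrite -{1}QQ -mulmxA -AQ mulmxA submxMl.
have [x [w w0 /andP [/submxP [X wX] wE]]] := symmetric_stable_eigenvector sA Q0 sQA.
have xs : x \in spectrum A.
  by rewrite mem_spectrum; apply: contra w0 => /eqP E0; rewrite -submx0 -E0.
by move: w0; rewrite -(eigenproj_id wE) wX -mulmxA QP // mulmx0 eqxx.
Qed.

End Eigenprojections.

Section InnerProduct.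
Variables (R : realType) (n : nat).
Implicit Types (u v : 'cV[R]_n) (A : 'M[R]_n).

Lemma sqnormE u : sqnorm u = dotp u u.
Proof. by rewrite /sqnorm /dotp mxE; apply: eq_bigr => i _; rewrite mxE expr2. Qed.

Lemma dotpC u v : dotp u v = dotp v u.
Proof. by rewrite /dotp -[v^T *m u]trmxK trmx_mul trmxK [RHS]mxE. Qed.

Lemma dotpDr u v1 v2 : dotp u (v1 + v2) = dotp u v1 + dotp u v2.
Proof. by rewrite /dotp mulmxDr mxE. Qed.

Lemma dotpDl u1 u2 v : dotp (u1 + u2) v = dotp u1 v + dotp u2 v.
Proof. by rewrite dotpC dotpDr !(dotpC v). Qed.

Lemma dotpZr u v k : dotp u (k *: v) = k * dotp u v.
Proof. by rewrite /dotp -scalemxAr mxE. Qed.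

Lemma dotpZl u v k : dotp (k *: u) v = k * dotp u v.
Proof. by rewrite dotpC dotpZr dotpC. Qed.

Lemma dotp0l v : dotp 0 v = 0.
Proof. by rewrite /dotp trmx0 mul0mx mxE. Qed.

Lemma dotp_sumr (I : Type) (r : seq I) u (F : I -> 'cV[R]_n) :
  dotp u (\sum_(i <- r) F i) = \sum_(i <- r) dotp u (F i).
Proof.
elim: r => [|a r IH]; first by rewrite !big_nil /dotp mulmx0 mxE.
by rewrite !big_cons dotpDr IH.
Qed.

Lemma dotp_suml (I : Type) (r : seq I) v (F : I -> 'cV[R]_n) :
  dotp (\sum_(i <- r) F i) v = \sum_(i <- r) dotp (F i) v.
Proof. by rewrite dotpC dotp_sumr; apply: eq_bigr => i _; rewrite dotpC. Qed.

Lemma dotpp_ge0 u : 0 <= dotp u u.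
Proof. by rewrite /dotp -{2}[u]trmxK gram_diag_ge0. Qed.

Lemma dotpp_eq0 u : dotp u u = 0 -> u = 0.
Proof.
move=> uu; apply/trmx_inj; rewrite trmx0; apply: gram_eq0.
by apply/matrixP => i j; rewrite !ord1 trmxK [RHS]mxE.
Qed.

Lemma dotp_trmx A u v : dotp u (A *m v) = dotp (A^T *m u) v.
Proof. by rewrite /dotp trmx_mul trmxK mulmxA. Qed.

Lemma dotp_delta A i j : dotp (delta_mx i 0) (A *m delta_mx j 0) = A i j.
Proof. by rewrite /dotp trmx_delta mulmxA -rowE -colE !mxE. Qed.

Lemma zero_diag_psd_eq0 A : A^T = A -> (forall i, A i i = 0) ->
  (forall v, 0 <= dotp v (A *m v)) -> A = 0.
Proof.
move=> sA diagA psdA; apply/matrixP => i j; rewrite mxE.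
have [<-|ij] := eqVneq i j; first exact: diagA.
have quad_ij k : dotp (delta_mx i 0 + k *: delta_mx j 0)
    (A *m (delta_mx i 0 + k *: delta_mx j 0)) = 2 * k * A i j.
  have Aji : A j i = A i j by rewrite -[in LHS]sA mxE.
  rewrite mulmxDr -scalemxAr !dotpDl !dotpDr !dotpZl !dotpZr !dotp_delta !diagA Aji.
  by ring.
have := psdA (delta_mx i 0 + 1 *: delta_mx j 0).
have := psdA (delta_mx i 0 + (-1) *: delta_mx j 0).
by rewrite !quad_ij; lra.
Qed.

End InnerProduct.

Section SpectralComponents.
Variables (R : realType) (n : nat) (A : 'M[R]_n).
Hypothesis sA : A^T = A.
Local Notation s := (spectrum A).
Local Notation P := (eigenproj A).
Implicit Types u v : 'cV[R]_n.

Lemma dotp_eigenproj l m u v :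
  dotp (P l *m u) (P m *m v) = if l == m then dotp u (P l *m v) else 0.
Proof.
rewrite -[P l]eigenproj_sym -dotp_trmx eigenproj_sym mulmxA.
case: eqP => [<-|/eqP lm]; first by rewrite eigenproj_idem.
by rewrite eigenproj_orth // mul0mx /dotp mulmx0 mxE.
Qed.

Lemma eigenproj_decomp v : v = \sum_(l <- s) P l *m v.
Proof. by rewrite -mulmx_suml eigenproj_sum ?mul1mx. Qed.

Lemma dotp_eigencomb (a b : R -> R) v :
  dotp (\sum_(l <- s) a l *: (P l *m v)) (\sum_(l <- s) b l *: (P l *m v)) =
  \sum_(l <- s) a l * b l * dotp v (P l *m v).
Proof.
rewrite dotp_suml big_seq [RHS]big_seq; apply: eq_bigr => l ls.
rewrite dotpZl dotp_sumr (bigD1_seq l) ?uniq_spectrum //= big1 ?addr0.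
  by rewrite dotpZr dotp_eigenproj eqxx mulrA.
by move=> m ml; rewrite dotpZr dotp_eigenproj eq_sym (negbTE ml) mulr0.
Qed.

Lemma quad_eigendecomp v : dotp v (A *m v) = \sum_(l <- s) l * dotp v (P l *m v).
Proof.
have Av : A *m v = \sum_(l <- s) l *: (P l *m v).
  by rewrite {1}(eigenproj_decomp v) mulmx_sumr; apply: eq_bigr => l _; rewrite mulmxA mulmx_eigenproj // scalemxAl.
rewrite Av {1}(eigenproj_decomp v) -[X in dotp X _](eq_bigr _ (fun l _ => scale1r _)).
by rewrite dotp_eigencomb; apply: eq_bigr => l _; rewrite mul1r.
Qed.

Lemma eigweightE l : eigweight A l = dotp (P l *m ones R n) (P l *m ones R n).
Proof. by rewrite dotp_eigenproj eqxx /dotp mulmxA. Qed.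

Lemma eigweight_ge0 l : 0 <= eigweight A l.
Proof. by rewrite eigweightE dotpp_ge0. Qed.

Lemma eigweight_eq0 l : eigweight A l = 0 -> P l *m ones R n = 0.
Proof. by rewrite eigweightE => /dotpp_eq0. Qed.

Lemma dotp_eigenproj_ge0 l v : 0 <= dotp v (P l *m v).
Proof. by have := dotp_eigenproj l l v v; rewrite eqxx => <-; apply: dotpp_ge0. Qed.

Lemma dotp_eigenproj_eigenvector l mu (r : 'rV[R]_n) v :
  r *m A = mu *: r -> l != mu -> dotp (P l *m v) r^T = 0.
Proof.
move=> rA lmu; have rP : r *m P l = 0.
  rewrite -(eigenproj_id (A := A) (W := r) (l := mu)); last exact/eigenspaceP.
  by rewrite -mulmxA eigenproj_orth ?mulmx0 // eq_sym.
by rewrite dotpC dotp_trmx -trmx_mul rP trmx0 dotp0l.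
Qed.

Hypothesis diagA : forall i, A i i = 0.

Lemma spectrum_has_pos : A != 0 -> has (fun l => 0 < l) s.
Proof.
apply: contraNT => /hasPn npos; apply/eqP/oppr_inj; rewrite oppr0.
apply: zero_diag_psd_eq0 => [|i|v]; first by rewrite linearN /= sA.
  by rewrite mxE diagA oppr0.
rewrite mulNmx -scaleN1r dotpZr mulN1r oppr_ge0 quad_eigendecomp big_seq.
by apply: sumr_le0 => l ls; rewrite mulr_le0_ge0 ?dotp_eigenproj_ge0 // leNgt npos.
Qed.

Lemma spectrum_has_neg : A != 0 -> has (fun l => l < 0) s.
Proof.
apply: contraNT => /hasPn nneg; apply/eqP; apply: zero_diag_psd_eq0 => // v.
rewrite quad_eigendecomp big_seq.
by apply: sumr_ge0 => l ls; rewrite mulr_ge0 ?dotp_eigenproj_ge0 // leNgt nneg.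
Qed.

End SpectralComponents.

Lemma sorted_head_le_last d (T : porderType d) (x0 : T) (r : seq T) l :
  sorted <=%O r -> l \in r -> (head x0 r <= l <= last x0 r)%O.
Proof.
move=> r_sorted /(nthP x0) [i ir <-].
have r_mono := sorted_leq_nth le_trans lexx x0 r_sorted.
have r_gt0 : (0 < size r)%N by apply: leq_ltn_trans ir.
rewrite -nth0 -nth_last; apply/andP; split; apply: r_mono; rewrite ?inE //.
- by rewrite prednK.
- by rewrite -ltnS prednK.
Qed.

Section RealBounds.
Variable R : realFieldType.

Lemma finite_pos_lbound (T : eqType) (r : seq T) (g : T -> R) :
  (forall x, x \in r -> 0 < g x) -> exists2 d, 0 < d & forall x, x \in r -> d <= g x.
Proof.
elim: r => [|a r IH] g_gt0; first by exists 1.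
have [d d0 dle] : exists2 d, 0 < d & forall x, x \in r -> d <= g x.
  by apply: IH => x xr; rewrite g_gt0 // in_cons xr orbT.
exists (Num.min d (g a)); first by rewrite lt_min d0 g_gt0 ?mem_head.
by move=> x; rewrite in_cons => /orP [/eqP ->|xr]; rewrite ge_min ?lexx ?orbT ?dle.
Qed.

Lemma one_sub_mul_ge0 (L M l x : R) :
  L < 0 -> 0 < M -> L <= l <= M -> L^-1 <= x <= M^-1 -> 0 <= 1 - l * x.
Proof.
move=> L0 M0 /andP [Ll lM] /andP [Lx xM]; rewrite subr_ge0.
have [x0|x0] := leP 0 x.
  by rewrite (le_trans (ler_wpM2r x0 lM)) // -(divff (lt0r_neq0 M0)) ler_pM2l.
by rewrite (le_trans (ler_wnM2r (ltW x0) Ll)) // -(divff (ltr0_neq0 L0)) ler_nM2l.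
Qed.

Lemma rational_term_bound (w l c c' h : R) : 0 <= w -> 0 < c -> c / 2 <= c' -> c' = c - l * h ->
  w / c' - w / c <= h * (w * l / c ^+ 2) + h ^+ 2 * (2 * w * l ^+ 2 / c ^+ 3).
Proof.
move=> w0 c0 cc' c'E; have c'0 : 0 < c' by apply: lt_le_trans cc'; rewrite divr_gt0.
have -> : w / c' - w / c = h * (w * l / c ^+ 2) + h ^+ 2 * (w * l ^+ 2 / c ^+ 2 / c').
  by rewrite c'E; field; rewrite -c'E !gt_eqF.
rewrite lerD2l; apply: ler_wpM2l; first exact: sqr_ge0.
have -> : 2 * w * l ^+ 2 / c ^+ 3 = w * l ^+ 2 / c ^+ 2 / (c / 2) by field; rewrite gt_eqF.
apply: ler_wpM2l; first exact: divr_ge0 (mulr_ge0 w0 (sqr_ge0 l)) (sqr_ge0 c).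
by rewrite lef_pV2 ?posrE // divr_gt0.
Qed.

End RealBounds.

Section LocalDescent.
Variables (R : realFieldType) (s : seq R) (w : R -> R) (x0 : R).
Hypothesis w_ge0 : forall l, l \in s -> 0 <= w l.
Hypothesis den_gt0 : forall l, l \in s -> w l != 0 -> 0 < 1 - l * x0.
Local Notation f x := (\sum_(l <- s) w l / (1 - l * x)).
Local Notation D := (\sum_(l <- s) w l * l / (1 - l * x0) ^+ 2).
Local Notation K := (\sum_(l <- s) 2 * w l * l ^+ 2 / (1 - l * x0) ^+ 3).

Lemma second_order_bound : exists2 d, 0 < d & forall h, `|h| <= d ->
  (forall l, l \in s -> w l != 0 -> 0 < 1 - l * (x0 + h)) /\
  f (x0 + h) - f x0 <= h * D + h ^+ 2 * K.
Proof.
(* [d] keeps each weighted denominator above half its value at [x0]. *)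
pose g l := (1 - l * x0) / (2 * (`|l| + 1)).
have [d d0 dle] : exists2 d, 0 < d & forall l, l \in [seq l <- s | w l != 0] -> d <= g l.
  apply: finite_pos_lbound => l; rewrite mem_filter => /andP [wl ls].
  by rewrite divr_gt0 ?den_gt0 // mulr_gt0 // ltr_wpDl.
exists d => // h hd.
have half l : l \in s -> w l != 0 -> (1 - l * x0) / 2 <= 1 - l * (x0 + h).
  move=> ls wl; have gl : d <= g l by rewrite dle // mem_filter wl.
  have lh : l * h <= (1 - l * x0) / 2.
    have -> : (1 - l * x0) / 2 = (`|l| + 1) * g l.
      by rewrite /g; field; rewrite lt0r_neq0 // ltr_wpDl.
    apply: le_trans (ler_norm _) _; rewrite normrM.
    by apply: ler_pM; rewrite ?normr_ge0 ?lerDl ?(le_trans hd gl).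
  by move: lh; rewrite mulrDr; move: (l * x0) (l * h) => a b; lra.
split=> [l ls wl|].
  by apply: lt_le_trans (half l ls wl); rewrite divr_gt0 ?den_gt0.
rewrite -sumrB mulr_sumr mulr_sumr -big_split /= big_seq [X in _ <= X]big_seq.
apply: ler_sum => l ls; have [->|wl] := eqVneq (w l) 0.
  by rewrite !(mul0r, mulr0, subrr, addr0).
by apply: rational_term_bound; rewrite ?w_ge0 ?den_gt0 ?half //; ring.
Qed.

Lemma local_descent : D != 0 -> exists2 d, 0 < d & forall h, `|h| <= d -> h * D < 0 ->
  (forall l, l \in s -> w l != 0 -> 0 < 1 - l * (x0 + h)) /\ f (x0 + h) < f x0.
Proof.
move=> D0; have [d d0 bound] := second_order_bound.
exists (Num.min d (`|D| / (`|K| + 1))).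
  by rewrite lt_min d0 divr_gt0 ?normr_gt0 // ltr_wpDl.
move=> h; rewrite le_min => /andP [hd hDK] hD.
have [pos bnd] := bound h hd; split => //.
rewrite -subr_lt0 (le_lt_trans bnd) //.
have h0 : 0 < `|h| by rewrite normr_gt0; apply: contraTneq hD => ->; rewrite mul0r ltxx.
have hD' : h * D = - (`|h| * `|D|) by rewrite -normrM ltr0_norm ?opprK.
have hK : h ^+ 2 * K <= `|h| * (`|h| * `|K|).
  rewrite mulrA -expr2 -normrX ger0_norm ?sqr_ge0 //.
  by apply: ler_wpM2l; rewrite ?sqr_ge0 ?ler_norm.
have hKD : `|h| * `|K| < `|D|.
  apply: le_lt_trans (ler_wpM2r (normr_ge0 K) hDK) _.
  by rewrite mulrAC ltr_pdivrMr ?ltr_wpDl // ltr_pM2l ?normr_gt0 // ltrDl.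
apply: le_lt_trans (lerD (lexx _) hK) _.
by rewrite hD' addrC subr_lt0 ltr_pM2l.
Qed.

Lemma interval_min_endpoint (a b : R) : a <= x0 <= b ->
  (forall x, a <= x <= b -> (forall l, l \in s -> w l != 0 -> 0 < 1 - l * x) ->
    f x0 <= f x) ->
  (D < 0 -> x0 = b) /\ (0 < D -> x0 = a).
Proof.
move=> /andP [ax0 x0b] fmin; split => [D_lt0|D_gt0].
- have [d d0 desc] := local_descent (ltr0_neq0 D_lt0).
  apply/eqP; rewrite eq_le x0b leNgt; apply/negP => x0_lt_b.
  have m_gt0 : 0 < Num.min d (b - x0) by rewrite lt_min d0 subr_gt0.
  have m_le : Num.min d (b - x0) <= b - x0 by rewrite ge_min lexx orbT.
  have [||pos lt] := desc (Num.min d (b - x0)).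
  + by rewrite gtr0_norm // ge_min lexx.
  + by rewrite pmulr_rlt0.
  suff /fmin /(_ pos) : a <= x0 + Num.min d (b - x0) <= b by rewrite leNgt lt.
  by move: m_gt0 m_le; move: (Num.min _ _) => m; lra.
- have [d d0 desc] := local_descent (lt0r_neq0 D_gt0).
  apply/eqP; rewrite eq_le ax0 andbT leNgt; apply/negP => a_lt_x0.
  have m_gt0 : 0 < Num.min d (x0 - a) by rewrite lt_min d0 subr_gt0.
  have m_le : Num.min d (x0 - a) <= x0 - a by rewrite ge_min lexx orbT.
  have [||pos lt] := desc (- Num.min d (x0 - a)).
  + by rewrite normrN gtr0_norm // ge_min lexx.
  + by rewrite mulNr oppr_lt0 mulr_gt0.
  suff /fmin /(_ pos) : a <= x0 + - Num.min d (x0 - a) <= b by rewrite leNgt lt.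
  by move: m_gt0 m_le; move: (Num.min _ _) => m; lra.
Qed.

End LocalDescent.

Section WA.
Variables (R : realType) (n : nat) (A : 'M[R]_n).
Local Notation s := (spectrum A).
Local Notation w := (eigweight A).

Lemma WA_real x : (forall l, l \in s -> w l != 0 -> 1 - l * x != 0) ->
  WA A x = (\sum_(l <- s) w l / (1 - l * x))%:E.
Proof.
move=> no_pole; rewrite /WA /=.
have -> : has (fun l => 1 - l * x == 0) [seq l <- s | w l != 0] = false.
  by apply/negbTE/hasPn => l; rewrite mem_filter => /andP [wl ls]; apply: no_pole.
congr (_%:E); rewrite big_filter big_mkcond; apply: eq_bigr => l _.
by case: ifP => // /negbFE /eqP ->; rewrite mul0r.
Qed.

Lemma WA_no_pole x : WA A x != +oo%E ->
  forall l, l \in s -> w l != 0 -> 1 - l * x != 0.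
Proof.
move=> Wfin l ls wl; apply: contra Wfin => /eqP pole; rewrite /WA /=.
suff -> : has (fun l => 1 - l * x == 0) [seq l <- s | w l != 0] by [].
by apply/hasP; exists l; rewrite ?mem_filter ?wl ?ls ?pole.
Qed.

End WA.

Section Witness.
Variables (R : realType) (n : nat) (A : 'M[R]_n) (x0 : R).
Hypothesis sA : A^T = A.
Local Notation s := (spectrum A).
Local Notation w := (eigweight A).
Local Notation P := (eigenproj A).
Local Notation one := (ones R n).
Hypothesis no_pole : forall l, l \in s -> w l != 0 -> 1 - l * x0 != 0.
Local Notation F := (\sum_(l <- s) w l / (1 - l * x0)).
Local Notation D := (\sum_(l <- s) w l * l / (1 - l * x0) ^+ 2).
Let u0 := \sum_(l <- s) (1 - l * x0)^-1 *: (P l *m one).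

Lemma dotp_eigencomb_ones (a b : R -> R) :
  dotp (\sum_(l <- s) a l *: (P l *m one)) (\sum_(l <- s) b l *: (P l *m one)) =
  \sum_(l <- s) a l * b l * w l.
Proof. by rewrite dotp_eigencomb //; apply: eq_bigr => l _; rewrite /dotp mulmxA. Qed.

Lemma ones_u0 : dotp one u0 = F.
Proof.
rewrite [in LHS](eigenproj_decomp sA one) -[X in dotp X _](eq_bigr _ (fun l _ => scale1r _)).
by rewrite dotp_eigencomb_ones; apply: eq_bigr => l _; rewrite mul1r mulrC.
Qed.

Lemma sqnorm_u0 : sqnorm u0 = F + x0 * D.
Proof.
rewrite sqnormE dotp_eigencomb_ones mulr_sumr -big_split /= big_seq [RHS]big_seq.
apply: eq_bigr => l ls; have [->|wl] := eqVneq (w l) 0; first by rewrite !(mulr0, mul0r, addr0).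
by field; rewrite no_pole.
Qed.

Lemma quad_u0 : dotp u0 (A *m u0) = D.
Proof.
have -> : A *m u0 = \sum_(l <- s) ((1 - l * x0)^-1 * l) *: (P l *m one).
  rewrite mulmx_sumr; apply: eq_bigr => l _.
  by rewrite -scalemxAr mulmxA mulmx_eigenproj // -scalemxAl scalerA.
rewrite dotp_eigencomb_ones big_seq [RHS]big_seq; apply: eq_bigr => l ls.
have [->|wl] := eqVneq (w l) 0; first by rewrite !(mulr0, mul0r).
by field; rewrite no_pole.
Qed.

Lemma witness_interior : D = 0 ->
  exists u, [/\ sqnorm u = F, dotp u (A *m u) = 0 & sqnorm u = dotp one u].
Proof. by move=> D0; exists u0; rewrite sqnorm_u0 quad_u0 ones_u0 D0 mulr0 addr0. Qed.

Lemma witness_endpoint mu : mu \in s -> mu * x0 = 1 -> w mu = 0 -> mu * D < 0 ->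
  exists u, [/\ sqnorm u = F, dotp u (A *m u) = 0 & sqnorm u = dotp one u].
Proof.
move=> mus mux wmu muD.
have mu0 : mu != 0 by move: mux; apply: contra_eqN => /eqP ->; rewrite mul0r eq_sym oner_eq0.
have /eigenvalueP [r rA r0] : eigenvalue A mu by rewrite -mem_spectrum.
have Av : A *m r^T = mu *: r^T by rewrite -{1}sA -trmx_mul rA linearZ.
(* [r^T] is orthogonal to every [P l *m one]: to [P mu *m one = 0] since [w mu = 0],
   and to the others as an eigenvector for a different eigenvalue. *)
have comb_v (a : R -> R) : dotp (\sum_(l <- s) a l *: (P l *m one)) r^T = 0.
  rewrite dotp_suml big_seq big1 // => l ls; rewrite dotpZl.
  have [->|lmu] := eqVneq l mu; first by rewrite eigweight_eq0 // dotp0l mulr0.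
  by rewrite (dotp_eigenproj_eigenvector sA _ rA lmu) mulr0.
have one_v : dotp one r^T = 0.
  rewrite -(comb_v (fun=> 1)); congr dotp.
  by rewrite {1}(eigenproj_decomp sA one); apply: eq_bigr => l _; rewrite scale1r.
have u0_v : dotp u0 r^T = 0 := comb_v _.
have vv_gt0 : 0 < dotp r^T r^T.
  rewrite lt_def dotpp_ge0 andbT; apply: contra r0 => /eqP /dotpp_eq0 r0.
  by rewrite -trmx_eq0 r0.
have t2_ge0 : 0 <= - D / (mu * dotp r^T r^T).
  have -> : - D / (mu * dotp r^T r^T) = - (mu * D) / (mu ^+ 2 * dotp r^T r^T).
    by field; rewrite mu0 gt_eqF.
  by apply: divr_ge0; [rewrite oppr_ge0 ltW | apply: mulr_ge0 (sqr_ge0 _) (ltW _)].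
pose t := Num.sqrt (- D / (mu * dotp r^T r^T)).
have t2 : t ^+ 2 = - D / (mu * dotp r^T r^T) by rewrite sqr_sqrtr.
have x0E : x0 = mu^-1 by apply: (mulfI mu0); rewrite mux mulfV.
exists (u0 + t *: r^T).
rewrite sqnormE mulmxDr -scalemxAr Av !dotpDl !dotpDr !dotpZl !dotpZr.
rewrite [dotp r^T (A *m u0)]dotp_trmx sA Av dotpZl -!(dotpC u0) u0_v one_v.
rewrite -sqnormE sqnorm_u0 quad_u0 (dotpC u0) ones_u0 !(mulr0, addr0) !mulrA -expr2 t2 x0E.
by split; field; rewrite mu0 gt_eqF.
Qed.

End Witness.

Section Minimizer.
Variables (R : realType) (n : nat) (A : 'M[R]_n).
Hypotheses (sA : A^T = A) (diagA : forall i, A i i = 0) (A0 : A != 0).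
Local Notation s := (spectrum A).
Local Notation w := (eigweight A).
Local Notation in_range x := ((lambda_min A)^-1 <= x <= (lambda_max A)^-1).

Lemma spectrum_bounds l : l \in s -> lambda_min A <= l <= lambda_max A.
Proof.
apply: sorted_head_le_last; have : sorted <%R s by exact: sorted_roots.
by rewrite lt_sorted_uniq_le => /andP [].
Qed.

Lemma lambda_min_lt0 : lambda_min A < 0.
Proof.
have /hasP [l ls l_lt0] := spectrum_has_neg sA diagA A0.
by case/andP: (spectrum_bounds ls) => /le_lt_trans/(_ l_lt0).
Qed.

Lemma lambda_max_gt0 : 0 < lambda_max A.
Proof.
have /hasP [l ls l_gt0] := spectrum_has_pos sA diagA A0.
by case/andP: (spectrum_bounds ls) => _; apply: lt_le_trans.
Qed.

Lemma lambda_min_mem : lambda_min A \in s.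
Proof.
move: (spectrum_has_neg sA diagA A0); rewrite /lambda_min.
by case: (spectrum A) => //= l r _; rewrite mem_head.
Qed.

Lemma lambda_max_mem : lambda_max A \in s.
Proof.
move: (spectrum_has_pos sA diagA A0); rewrite /lambda_max.
by case/lastP: (spectrum A) => // r l _; rewrite last_rcons mem_rcons mem_head.
Qed.

Lemma range_den_ge0 x l : in_range x -> l \in s -> 0 <= 1 - l * x.
Proof.
by move=> xI ls; apply: one_sub_mul_ge0 lambda_min_lt0 lambda_max_gt0 (spectrum_bounds ls) xI.
Qed.

Variable x0 : R.
Hypothesis x0_range : in_range x0.
Hypothesis x0_min : forall x, in_range x -> (WA A x0 <= WA A x)%E.

Lemma minimizer_den_gt0 l : l \in s -> w l != 0 -> 0 < 1 - l * x0.
Proof.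
have : WA A x0 != +oo%E.
  have : in_range 0 by rewrite !ltW ?invr_lt0 ?invr_gt0 ?lambda_min_lt0 ?lambda_max_gt0.
  move/x0_min; rewrite (@WA_real _ _ _ 0) => [|k _ _]; last by rewrite mulr0 subr0 oner_neq0.
  by apply: contraTneq => ->; rewrite leye_eq.
move=> /WA_no_pole no_pole ls wl.
by rewrite lt_def range_den_ge0 // andbT no_pole.
Qed.

Lemma minimizer_stationary :
  let D := \sum_(l <- s) w l * l / (1 - l * x0) ^+ 2 in
  D = 0 \/ (exists mu, [/\ mu \in s, mu * x0 = 1, w mu = 0 & mu * D < 0]).
Proof.
move=> D.
have f_min x : in_range x -> (forall l, l \in s -> w l != 0 -> 0 < 1 - l * x) ->
    \sum_(l <- s) w l / (1 - l * x0) <= \sum_(l <- s) w l / (1 - l * x).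
  move=> xI x_pos; move: (x0_min xI); rewrite !WA_real ?lee_fin // => l ls wl.
    by rewrite lt0r_neq0 ?x_pos.
  by rewrite lt0r_neq0 ?minimizer_den_gt0.
have [D_lt0_end D_gt0_end] :=
  interval_min_endpoint (fun l _ => eigweight_ge0 sA l) minimizer_den_gt0 x0_range f_min.
have end_weight0 mu : mu \in s -> mu * x0 = 1 -> w mu = 0.
  move=> mus mux; apply/eqP; apply: contraT => /(minimizer_den_gt0 mus).
  by rewrite mux subrr ltxx.
have [D_lt0|D_gt0|] := ltgtP D 0; [right|right|by left].
- have mux : lambda_max A * x0 = 1 by rewrite (D_lt0_end D_lt0) mulfV ?lt0r_neq0 ?lambda_max_gt0.
  by exists (lambda_max A); rewrite end_weight0 ?lambda_max_mem // pmulr_rlt0 ?lambda_max_gt0.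
- have mux : lambda_min A * x0 = 1 by rewrite (D_gt0_end D_gt0) mulfV ?ltr0_neq0 ?lambda_min_lt0.
  by exists (lambda_min A); rewrite end_weight0 ?lambda_min_mem // nmulr_rlt0 ?lambda_min_lt0.
Qed.

End Minimizer.

Theorem proposition7 (R : realType) (n : nat) (e : rel 'I_n) (A : 'M[R]_n) (y : R) :
  simple_graph e -> weighted_adjacency e A -> A != 0 ->
  (exists2 x0 : R, (lambda_min A)^-1 <= x0 <= (lambda_max A)^-1 & WA A x0 = WA A y) ->
  (forall x : R, (lambda_min A)^-1 <= x <= (lambda_max A)^-1 -> (WA A y <= WA A x)%E) ->
  exists u : 'cV[R]_n,
    [/\ (sqnorm u)%:E = WA A y, dotp u (A *m u) = 0 & sqnorm u = dotp (ones R n) u].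
Proof.
move=> _ [sA [diagA _]] A0 [x0 x0_range <-] x0_min.
have no_pole l : l \in spectrum A -> eigweight A l != 0 -> 1 - l * x0 != 0.
  by move=> ls wl; rewrite lt0r_neq0 // (minimizer_den_gt0 sA diagA A0 x0_range x0_min).
rewrite WA_real //.
have [D0|[mu [mus mux wmu muD]]] := minimizer_stationary sA diagA A0 x0_range x0_min.
- have [u [uF uA u1]] := witness_interior sA no_pole D0.
  by exists u; rewrite -uF; split.
- have [u [uF uA u1]] := witness_endpoint sA no_pole mus mux wmu muD.
  by exists u; rewrite -uF; split.
Qed.
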